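(* For every graph $G$ on $n\ge 1$ vertices, \[ \operatorname{rank}(A_G+I)\cdot \operatorname{rank}(A_{\overline{G}}+I)\ \ge\ n, \] with equality if and only if $G=K_n$ or $\overline{G}=K_n$.
   Context: All graphs are simple (undirected, no loops or multiple edges). $A_G$ denotes the $n\times n$ adjacency matrix of $G$, $\overline{G}$ the complement of $G$, $I=I_n$ the $n\times n$ identity matrix, and $\operatorname{rank}$ is the rank over $\mathbb{R}$. $K_n$ is the complete graph on $n$ vertices. *)

From mathcomp Require Import all_boot all_order all_algebra.
From mathcomp Require Import reals.
Set Implicit Arguments. Unset Strict Implicit. Unset Printing Implicit Defensive.
Import GRing.Theory Num.Theory.
Local Open Scope ring_scope.

Definition simple_graph (n : nat) (e : rel 'I_n) : Prop :=
  (forall x, ~~ e x x) /\ (forall x y, e x y = e y x).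

Definition compl_graph (n : nat) (e : rel 'I_n) : rel 'I_n :=
  fun x y => (x != y) && ~~ e x y.

Definition complete_graph (n : nat) : rel 'I_n := fun x y => x != y.

Definition adjmx (R : nzRingType) (n : nat) (e : rel 'I_n) : 'M[R]_n :=
  \matrix_(i, j) (e i j)%:R.
Arguments complete_graph : clear implicits.

From mathcomp Require Import all_boot all_order all_algebra.
From mathcomp Require Import reals.
From mathcomp Require Import zify lra.
Set Implicit Arguments. Unset Strict Implicit. Unset Printing Implicit Defensive.
Import Order.TTheory GRing.Theory Num.Theory.
Local Open Scope ring_scope.

(* Let A = A_G + I and B = A_Gbar + I, so that A + B = J + I is positive
   definite and the left kernels of A and B meet trivially.  If
   rank A + rank B <= n, these kernels therefore span the whole space, and
   for an edge ij the vector z = e_i - e_j, which is isotropic for A, splits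
   as z = x + y with x A = 0 and y B = 0; then 0 = z A z^T = y (A + B) y^T
   forces y = 0, so z A = 0: adjacent vertices have the same closed
   neighbourhood.  The same holds in the complement, which makes G complete
   or empty, where the ranks are 1 and n.  Hence rank A + rank B > n, and
   since both ranks are at most n, their product is at least n, with
   equality only when one of them is 1; and rank A = 1 forces G complete,
   since a non-edge ij yields a 2x2 identity submatrix of A. *)

Section IsotropicKernel.
Variables (R : fieldType) (n : nat) (A B : 'M[R]_n).
Hypothesis AB_anisotropic : forall y : 'rV[R]_n, y *m (A + B) *m y^T = 0 -> y = 0.
Hypothesis rankAB : (\rank A + \rank B <= n)%N.

Lemma row_full_adds_kermx : row_full (kermx A + kermx B)%MS.
Proof.
have capK0 : (kermx A :&: kermx B)%MS = 0.
  apply/row_matrixP => k; rewrite row0; apply: AB_anisotropic.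
  have /sub_kermxP KA : (kermx A :&: kermx B <= kermx A)%MS := capmxSl _ _.
  have /sub_kermxP KB : (kermx A :&: kermx B <= kermx B)%MS := capmxSr _ _.
  by rewrite mulmxDr -!row_mul KA KB row0 addr0 mul0mx.
rewrite /row_full eqn_leq rank_leq_col /=.
have := mxrank_sum_cap (kermx A) (kermx B).
rewrite capK0 mxrank0 addn0 !mxrank_ker => ->.
have := rank_leq_col A; have := rank_leq_col B; lia.
Qed.

Hypothesis A_sym : A^T = A.

Lemma isotropic_mulmx_eq0 (z : 'rV[R]_n) : z *m A *m z^T = 0 -> z *m A = 0.
Proof.
have /sub_addsmxP [u ->] := submx_full z row_full_adds_kermx.
set x := u.1 *m _; set y := u.2 *m _.
have xA0 : x *m A = 0 by rewrite -mulmxA mulmx_ker mulmx0.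
have yB0 : y *m B = 0 by rewrite -mulmxA mulmx_ker mulmx0.
have yAx0 : y *m A *m x^T = 0 by rewrite -mulmxA -{1}A_sym -trmx_mul xA0 trmx0 mulmx0.
have -> : (x + y) *m A *m (x + y)^T = y *m (A + B) *m y^T.
  by rewrite mulmxDl xA0 add0r linearD /= mulmxDr yAx0 add0r mulmxDr yB0 addr0.
by move/AB_anisotropic->; rewrite mulmxDl xA0 mul0mx addr0.
Qed.

End IsotropicKernel.

Lemma const1_add1_anisotropic (R : realFieldType) (n : nat) (y : 'rV[R]_n) :
  y *m (const_mx 1 + 1%:M) *m y^T = 0 -> y = 0.
Proof.
have qfE : (y *m (const_mx 1 + 1%:M) *m y^T) 0 0 =
    (\sum_k y 0 k) ^+ 2 + \sum_k y 0 k ^+ 2.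
  rewrite mulmxDr mulmx1 mulmxDl mxE [X in _ + X]mxE.
  congr (_ + _); last by apply: eq_bigr => k _; rewrite mxE expr2.
  rewrite mxE expr2 mulr_suml; apply: eq_bigr => k _; rewrite !mxE mulrC.
  by congr (_ * _); apply: eq_bigr => l _; rewrite mxE mulr1.
move/matrixP/(_ 0 0); rewrite qfE mxE => qf0.
have sq0 : \sum_k y 0 k ^+ 2 = 0.
  apply/eqP; rewrite eq_le sumr_ge0 ?andbT => [|k _]; last exact: sqr_ge0.
  by have := sqr_ge0 (\sum_k y 0 k); lra.
apply/rowP => k; rewrite mxE; apply/eqP; rewrite -sqrf_eq0.
move/eqP: sq0; rewrite psumr_eq0 => [/allP/(_ k (mem_index_enum k))/implyP/(_ isT)//|l _].
exact: sqr_ge0.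
Qed.

Lemma mxrank_mxsub (R : fieldType) (m n m' n' : nat) (f : 'I_m' -> 'I_m)
    (g : 'I_n' -> 'I_n) (A : 'M[R]_(m, n)) :
  (\rank (mxsub f g A) <= \rank A)%N.
Proof.
rewrite -[A in mxsub _ _ A]mulmx1 mxsub_mul.
exact: leq_trans (mxrankM_maxl _ _) (mxrankS (rowsub_sub _ _)).
Qed.

Lemma twins_complete_or_empty (T : finType) (e : rel T) : (forall x, ~~ e x x) ->
  (forall i j, e i j -> forall k, ((i == k) || e i k) = ((j == k) || e j k)) ->
  (forall i j, i != j -> ~~ e i j ->
     forall k, ((i == k) || ~~ e i k) = ((j == k) || ~~ e j k)) ->
  (forall i j, i != j -> e i j) \/ (forall i j, ~~ e i j).
Proof.
move=> irr twinE twinN.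
have [[i j] /= eij|no_edge] := pickP [pred p : T * T | e p.1 p.2]; last first.
  by right=> i j; apply/negbT/(no_edge (i, j)).
left.
have ij : i != j by apply: contraTneq eij => ->; exact: irr.
have e_i : forall k, i != k -> e i k.
  move=> k ik; apply/negPn/negP => nik.
  have /norP [jk njk] : ~~ ((j == k) || e j k) by rewrite -(twinE i j eij) negb_or ik.
  have := twinN i k ik nik j; rewrite (negbTE ij) eij.
  by rewrite -(twinN j k jk njk j) eqxx.
move=> p q; have [->|pi pq] := eqVneq p i; first exact: e_i.
have iq : (i == q) || e i q by case: eqVneq => //= /e_i.
by rewrite (twinE i p) ?(negbTE pq) // e_i // eq_sym in iq.
Qed.

Lemma leq_mul_of_ltn_add (a b n : nat) : (a <= n)%N -> (b <= n)%N -> (n < a + b)%N ->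
  (n <= a * b)%N /\ ((a * b)%N = n -> a = 1%N \/ b = 1%N).
Proof.
move=> a_le b_le ab_gt; have a_gt0 : (0 < a)%N by lia.
have b_gt0 : (0 < b)%N by lia.
split; first by nia.
move=> ab_n; have [a1|a_ne1] := eqVneq a 1%N; [by left | right].
have a_ge2 : (2 <= a)%N by lia.
nia.
Qed.

Lemma simple_compl_graph (n : nat) (e : rel 'I_n) : simple_graph e -> simple_graph (compl_graph e).
Proof. by move=> [_ sym]; split=> [x|x y]; rewrite /compl_graph ?eqxx // eq_sym sym. Qed.

Lemma compl_graphK (n : nat) (e : rel 'I_n) : (forall x, ~~ e x x) ->
  compl_graph (compl_graph e) =2 e.
Proof.
move=> irr i j; rewrite /compl_graph; case: eqVneq => [->|] /=.
  by rewrite (negbTE (irr j)).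
by rewrite negbK.
Qed.

Section ClosedAdjacency.
Variables (R : realFieldType) (n : nat).
Local Notation adj1 e := (adjmx R e + 1%:M).

Lemma adj1mxE (e : rel 'I_n) : (forall x, ~~ e x x) ->
  forall i j, adj1 e i j = ((i == j) || e i j)%:R.
Proof.
move=> irr i j; rewrite !mxE; case: eqVneq => [->|_].
  by rewrite (negbTE (irr j)) add0r.
by rewrite addr0.
Qed.

Lemma adjmx_eq2 (e1 e2 : rel 'I_n) : e1 =2 e2 -> adjmx R e1 = adjmx R e2.
Proof. by move=> e12; apply/matrixP => i j; rewrite !mxE e12. Qed.

Lemma adj1mx_add_compl (e : rel 'I_n) : (forall x, ~~ e x x) ->
  adj1 e + adj1 (compl_graph e) = const_mx 1 + 1%:M.
Proof.
move=> irr; have irrc : forall x, ~~ compl_graph e x x by move=> x; rewrite /compl_graph eqxx.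
apply/matrixP => i j; rewrite mxE !adj1mxE // !mxE /compl_graph.
by case: eqVneq => //= _; case: (e i j); rewrite ?addr0 ?add0r.
Qed.

Lemma adj1mx_twins (e : rel 'I_n) (B : 'M[R]_n) (i j : 'I_n) :
  simple_graph e -> adj1 e + B = const_mx 1 + 1%:M ->
  (\rank (adj1 e) + \rank B <= n)%N -> e i j ->
  forall k, ((i == k) || e i k) = ((j == k) || e j k).
Proof.
move=> [irr sym] AB rankAB eij k.
have A_sym : (adj1 e)^T = adj1 e.
  by apply/matrixP => a b; rewrite mxE !adj1mxE // sym eq_sym.
set z : 'rV[R]_n := delta_mx 0 i - delta_mx 0 j.
have zA0 : z *m adj1 e = 0.
  apply: (isotropic_mulmx_eq0 (B := B)) => //; first by rewrite AB; exact: const1_add1_anisotropic.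
  apply/matrixP => a b; rewrite !ord1 [RHS]mxE.
  rewrite /z mulmxBl -!rowE linearB /= !trmx_delta mulmxBr -!colE !mxE.
  have ij : i != j by apply: contraTneq eij => ->; exact: irr.
  rewrite (negbTE (irr i)) (negbTE (irr j)) sym eij eq_sym (negbTE ij) !eqxx.
  by rewrite !add0r addr0 !subrr.
have rowA a : row a (adj1 e) 0 k = ((a == k) || e a k)%:R by rewrite mxE adj1mxE.
move/eqP: zA0; rewrite /z mulmxBl -!rowE subr_eq0 => /eqP/rowP/(_ k).
by rewrite !rowA => /eqP; rewrite eqr_nat; case: ((i == k) || _); case: ((j == k) || _).
Qed.

Lemma adj1mx_complete_ranks (e : rel 'I_n) : (0 < n)%N ->
  e =2 complete_graph n ->
  \rank (adj1 e) = 1%N /\ \rank (adj1 (compl_graph e)) = n.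
Proof.
move=> n_gt0 eK; have irr x : ~~ e x x by rewrite eK /complete_graph eqxx.
split.
  apply/eqP; rewrite eqn_leq.
  have J_outer : adj1 e = (const_mx 1 : 'cV_n) *m (const_mx 1 : 'rV_n).
    apply/matrixP => i j; rewrite adj1mxE // !mxE big_ord1 !mxE mulr1 eK.
    by rewrite /complete_graph orbN.
  rewrite {1}J_outer (leq_trans (mxrankM_maxr _ _) (rank_leq_row _)) /=.
  rewrite lt0n mxrank_eq0; apply/eqP => /matrixP/(_ (Ordinal n_gt0) (Ordinal n_gt0)).
  by rewrite adj1mxE // eqxx mxE => /eqP; rewrite oner_eq0.
have -> : adj1 (compl_graph e) = 1%:M.
  apply/matrixP => i j; rewrite adj1mxE => [|x]; last by rewrite /compl_graph eqxx.
  by rewrite /compl_graph eK /complete_graph mxE; case: eqVneq.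
exact: mxrank1.
Qed.

Lemma complete_of_rank_adj1mx (e : rel 'I_n) : simple_graph e ->
  \rank (adj1 e) = 1%N -> e =2 complete_graph n.
Proof.
move=> [irr sym] rank1 i j; rewrite /complete_graph.
have [->|ij] := eqVneq i j; first exact/negbTE.
apply/negPn/negP => nij.
pose f (k : 'I_2) := if k == 0 then i else j.
have sub1 : mxsub f f (adj1 e) = 1%:M.
  apply/matrixP => k l; rewrite mxE adj1mxE // mxE /f.
  case: k => [[|[|k]] hk]; case: l => [[|[|l]] hl] //=; rewrite ?eqxx //.
    by rewrite (negbTE ij) (negbTE nij).
  by rewrite eq_sym (negbTE ij) sym (negbTE nij).
by have := mxrank_mxsub f f (adj1 e); rewrite sub1 mxrank1 rank1.
Qed.

Lemma rank_adj1mx_add_compl_gt (e : rel 'I_n) : (0 < n)%N -> simple_graph e ->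
  (n < \rank (adj1 e) + \rank (adj1 (compl_graph e)))%N.
Proof.
move=> n_gt0 e_simple; have [irr _] := e_simple.
rewrite ltnNge; apply/negP => rankAB.
have twinE := adj1mx_twins e_simple (adj1mx_add_compl irr) rankAB.
have twinN i j : i != j -> ~~ e i j ->
    forall k, ((i == k) || ~~ e i k) = ((j == k) || ~~ e j k).
  move=> ij nij k.
  have complE a : ((a == k) || ~~ e a k) = ((a == k) || compl_graph e a k).
    by rewrite /compl_graph; case: eqVneq.
  rewrite !complE; apply: (adj1mx_twins (simple_compl_graph e_simple) (B := adj1 e)).
  - by rewrite addrC adj1mx_add_compl.
  - by rewrite addnC.
  - by rewrite /compl_graph ij.
have [eK|e0] := twins_complete_or_empty irr twinE twinN.
  have e_complete : e =2 complete_graph n.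
    by move=> i j; rewrite /complete_graph; case: eqVneq => [->|/eK //]; exact/negbTE.
  by have [r1 rn] := adj1mx_complete_ranks n_gt0 e_complete; rewrite r1 rn ltnn in rankAB.
have ec_complete : compl_graph e =2 complete_graph n.
  by move=> i j; rewrite /compl_graph e0 andbT.
have [r1 rn] := adj1mx_complete_ranks n_gt0 ec_complete.
by rewrite (adjmx_eq2 (compl_graphK irr)) in rn; rewrite r1 rn addn1 ltnn in rankAB.
Qed.

End ClosedAdjacency.

Theorem theorem2p1 (R : realType) (n : nat) (e : rel 'I_n) :
  (1 <= n)%N -> simple_graph e ->
  (n <= \rank (adjmx R e + 1%:M)%R * \rank (adjmx R (compl_graph e) + 1%:M)%R)%N /\
  ((\rank (adjmx R e + 1%:M)%R * \rank (adjmx R (compl_graph e) + 1%:M)%R)%N = n <->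
     (e =2 complete_graph n \/ compl_graph e =2 complete_graph n)).
Proof.
move=> n_gt0 e_simple; have [irr _] := e_simple.
have [ab_ge ab_eq] := leq_mul_of_ltn_add (rank_leq_row (adjmx R e + 1%:M))
  (rank_leq_row (adjmx R (compl_graph e) + 1%:M))
  (rank_adj1mx_add_compl_gt R n_gt0 e_simple).
split=> //; split=> [/ab_eq [a1 | b1] | [eK | ecK]].
- by left; exact: complete_of_rank_adj1mx e_simple a1.
- by right; exact: complete_of_rank_adj1mx (simple_compl_graph e_simple) b1.
- by have [-> ->] := adj1mx_complete_ranks R n_gt0 eK; rewrite mul1n.
- have [-> rn] := adj1mx_complete_ranks R n_gt0 ecK.
  by rewrite (adjmx_eq2 R (compl_graphK irr)) in rn; rewrite rn muln1.
Qed.
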